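(* Let $q\neq-1$ and $r$ be real parameters. Let $t$ be a tiling of an $n$-board with $k$ dominoes and $\ell$ black squares. Write $t$ as a word (read from left to right) in the letters $a$ (white square), $b$ (black square) and $D$ (domino). Let $T$ be the tiling whose word is obtained from that of $t$ by keeping every letter $a$ at its place in the word and writing the remaining letters (the $b$'s and $D$'s) in reverse order. Let $A$ be the tiling of the $n$-board obtained from $T$ by replacing every square (white or black) by a colourless square of weight $1$, and let $B$ be the tiling of the $(n-2k)$-board obtained from $T$ by deleting all dominoes. Then $$w_r(t)=q^{k\ell}\,w_r(A)\,w_r(B).$$
   Context: An $m$-board is a $1\times m$ rectangle with cells numbered $1,\dots,m$, tiled by white squares, black squares (each covering one cell) and dominoes (covering two adjacent cells); in $A$ also colourless squares occur. The weight $w_r$: a white square has weight $x$; a black square at cell $i$ has weight $q^i r x$; a domino covering cells $i-1,i$ has weight $q^{i-1}s$; a colourless square has weight $1$. The weight of a tiling is the product of the weights of its tiles. *)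

From mathcomp Require Import all_boot all_order all_algebra.
Set Implicit Arguments. Unset Strict Implicit. Unset Printing Implicit Defensive.
Import GRing.Theory Num.Theory.
Local Open Scope ring_scope.

Inductive tile := White | Black | Domino | Colourless.

Definition tile_len (c : tile) : nat := if c is Domino then 2%N else 1%N.

Definition board_len (t : seq tile) : nat := sumn (map tile_len t).

Definition is_white (c : tile) : bool := if c is White then true else false.
Definition is_black (c : tile) : bool := if c is Black then true else false.
Definition is_domino (c : tile) : bool := if c is Domino then true else false.
Definition is_colourless (c : tile) : bool := if c is Colourless then true else false.

(* weight of a tiling word whose first tile starts at cell p+1:
   white square: x; black square at cell i: q^i r x;
   domino covering cells i-1, i: q^(i-1) s; colourless square: 1. *)
Fixpoint wt_from (R : ringType) (q r s x : R) (p : nat) (t : seq tile) : R :=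
  match t with
  | [::] => 1
  | White :: t' => x * wt_from q r s x p.+1 t'
  | Black :: t' => q ^+ p.+1 * r * x * wt_from q r s x p.+1 t'
  | Domino :: t' => q ^+ p.+1 * s * wt_from q r s x p.+2 t'
  | Colourless :: t' => wt_from q r s x p.+1 t'
  end.

Definition w_r (R : ringType) (q r s x : R) (t : seq tile) : R := wt_from q r s x 0 t.

Fixpoint fill_nonwhite (t stack : seq tile) : seq tile :=
  match t with
  | [::] => [::]
  | White :: t' => White :: fill_nonwhite t' stack
  | c :: t' => head c stack :: fill_nonwhite t' (behead stack)
  end.

Definition transformT (t : seq tile) : seq tile :=
  fill_nonwhite t (rev (filter (fun c => ~~ is_white c) t)).

Definition decolour (c : tile) : tile := if c is Domino then Domino else Colourless.
Definition tilingA (t : seq tile) : seq tile := map decolour (transformT t).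

Definition tilingB (t : seq tile) : seq tile :=
  filter (fun c => ~~ is_domino c) (transformT t).

From mathcomp Require Import all_boot all_order all_algebra.
From mathcomp Require Import ring zify.
Import GRing.Theory Num.Theory.
Local Open Scope ring_scope.

(* The weight of a tiling is x^(#a + #b) r^#b s^#D q^e, where e sums the
   cells at which the black squares and dominoes start.  The start of a
   non-white letter is one plus the number of white squares before it plus
   the total length of the non-white letters before it.  Since T keeps the
   white squares in place, the white contribution is the same for t and for
   A, B together, and everything reduces to the word c of non-white letters
   of t: the exponent of t sums, over pairs of letters of c, the length of
   the earlier one, while for A and B (built on rev c) an earlier letter is
   felt by a later domino in A, and by a later black square in B only if it
   is black itself.  The two counts differ exactly on the pairs {b, D},
   which gives the factor q^(kl). *)

Local Notation nonwhite u := (filter (fun c => ~~ is_white c) u).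
Local Notation dominofree u := (filter (fun c => ~~ is_domino c) u).
Local Notation no_colourless u := (all (fun c => ~~ is_colourless c) u).

Definition is_bD (c : tile) : bool := is_black c || is_domino c.

Fixpoint qexp (p : nat) (t : seq tile) : nat :=
  match t with
  | [::] => 0
  | White :: t' => qexp p.+1 t'
  | Black :: t' => p.+1 + qexp p.+1 t'
  | Domino :: t' => p.+1 + qexp p.+2 t'
  | Colourless :: t' => qexp p.+1 t'
  end%N.

Lemma wt_fromE (R : comNzRingType) (q r s x : R) (p : nat) (t : seq tile) :
  wt_from q r s x p t = x ^+ (count is_white t + count is_black t) *
    r ^+ count is_black t * s ^+ count is_domino t * q ^+ qexp p t.
Proof.
elim: t p => [|c t IH] p /=; first by rewrite !expr0 !mulr1.
by case: c; rewrite /= IH ?add0n ?addn0 ?exprD ?expr1 ?exprS; ring.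
Qed.

Lemma qexp_shift (d p : nat) (t : seq tile) :
  qexp (d + p) t = (qexp p t + d * (count is_black t + count is_domino t))%N.
Proof.
elim: t p => [|c t IH] p /=; first by lia.
by case: c; rewrite /= -?addnS IH; lia.
Qed.

Fixpoint white_offset (p : nat) (t : seq tile) : nat :=
  match t with
  | [::] => 0
  | White :: t' => white_offset p.+1 t'
  | _ :: t' => p.+1 + white_offset p t'
  end%N.

Fixpoint prefix_len_sum (c : seq tile) : nat :=
  match c with
  | [::] => 0
  | d :: c' => tile_len d * size c' + prefix_len_sum c'
  end%N.

(* The non-white part of the exponents of A and B: in A a domino sees the
   lengths of all earlier letters, in B a black square sees only the earlier
   black squares (the dominoes have been deleted). *)
Fixpoint split_prefix_sum (c : seq tile) : nat :=
  match c with
  | [::] => 0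
  | d :: c' => tile_len d * count is_domino c' + is_black d * count is_black c'
               + split_prefix_sum c'
  end%N.

Lemma size_nonwhite (u : seq tile) : no_colourless u ->
  size (nonwhite u) = (count is_black u + count is_domino u)%N.
Proof. by elim: u => [|[] u IH] //= /IH ->; lia. Qed.

Lemma qexp_nonwhite (p : nat) (u : seq tile) : no_colourless u ->
  qexp p u = (white_offset p u + prefix_len_sum (nonwhite u))%N.
Proof.
elim: u p => [|c u IH] p //= /andP [cnc unc].
case: c cnc => //= _; first by rewrite IH.
- by rewrite (qexp_shift 1) IH // size_nonwhite //; lia.
- by rewrite (qexp_shift 2) IH // size_nonwhite //; lia.
Qed.

Lemma count_decolour (P : pred tile) (u : seq tile) : P Colourless = false ->
  count P (map decolour u) = (P Domino * count is_domino u)%N.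
Proof. by move=> PC; elim: u => [|[] u IH] /=; rewrite ?muln0 // ?PC IH; lia. Qed.

Lemma count_dominofree (P : pred tile) (u : seq tile) : P Domino = false ->
  count P (dominofree u) = count P u.
Proof. by move=> PD; elim: u => [|[] u IH] //=; rewrite ?PD IH. Qed.

Lemma count_domino_dominofree (u : seq tile) : count is_domino (dominofree u) = 0%N.
Proof. by elim: u => [|[] u IH]. Qed.

Lemma count_nonwhite (P : pred tile) (u : seq tile) : P White = false ->
  count P (nonwhite u) = count P u.
Proof. by move=> PW; elim: u => [|[] u IH] //=; rewrite ?PW IH. Qed.

Lemma all_nonwhite (P : pred tile) (u : seq tile) : P White ->
  all P (nonwhite u) = all P u.
Proof. by move=> PW; elim: u => [|[] u IH] //=; rewrite ?PW IH. Qed.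

Lemma qexp_decolour_dominofree (p : nat) (u : seq tile) : no_colourless u ->
  (qexp p (map decolour u) + qexp p (dominofree u))%N
  = (white_offset p u + split_prefix_sum (nonwhite u))%N.
Proof.
elim: u p => [|c u IH] p //= /andP [cnc unc].
case: c cnc => //= _; first exact: IH.
all: rewrite !(qexp_shift 1, qexp_shift 2) !count_decolour // ?count_domino_dominofree.
all: rewrite ?count_dominofree // !count_nonwhite //=.
all: by have := IH p unc; lia.
Qed.

Lemma board_len_bD (c : seq tile) : all is_bD c ->
  board_len c = (count is_black c + 2 * count is_domino c)%N.
Proof.
rewrite /board_len; elim: c => [|d c IH] //= /andP [dbD /IH ->].
by case: d dbD => //= _; lia.
Qed.

Lemma prefix_len_sum_rcons (c : seq tile) (d : tile) :
  prefix_len_sum (rcons c d) = (prefix_len_sum c + board_len c)%N.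
Proof. by rewrite /board_len; elim: c => [|e c IH] /=; rewrite ?IH ?size_rcons; lia. Qed.

Lemma board_len_rev (c : seq tile) : board_len (rev c) = board_len c.
Proof. by rewrite /board_len map_rev sumn_rev. Qed.

(* Inversion count: the pairs (b, D) and (D, b) account for the difference. *)
Lemma prefix_len_sum_rev (c : seq tile) : all is_bD c ->
  prefix_len_sum (rev c) =
    (count is_domino c * count is_black c + split_prefix_sum c)%N.
Proof.
elim: c => [|d c IH] //= /andP [dbD cbD].
rewrite rev_cons prefix_len_sum_rcons board_len_rev IH // board_len_bD //.
by case: d dbD => //= _; lia.
Qed.

Lemma nonwhite_fill (t st : seq tile) :
  size st = count (fun c => ~~ is_white c) t -> all (fun c => ~~ is_white c) st ->
  nonwhite (fill_nonwhite t st) = st.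
Proof.
elim: t st => [|c t IH] st /=; first by case: st.
case: c => /=; first exact: IH.
all: case: st => [|d st] //=; rewrite add1n => -[size_st] /andP [dnw stnw].
all: by rewrite dnw IH.
Qed.

Lemma white_offset_fill (p : nat) (t st : seq tile) :
  all (fun c => ~~ is_white c) st -> white_offset p (fill_nonwhite t st) = white_offset p t.
Proof.
elim: t st p => [|c t IH] st p //= stnw.
case: c => /=; first exact: IH.
all: case: st stnw => [|d st] /=; first by rewrite IH.
all: by case: d => //= /IH ->.
Qed.

Lemma count_white_fill (t st : seq tile) :
  all (fun c => ~~ is_white c) st -> count is_white (fill_nonwhite t st) = count is_white t.
Proof.
elim: t st => [|c t IH] st //= stnw.
case: c => /=; first by rewrite IH.
all: case: st stnw => [|d st] /=; first by rewrite IH.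
all: by case: d => //= /IH ->.
Qed.

Lemma board_len_nonwhite (u : seq tile) :
  board_len u = (count is_white u + board_len (nonwhite u))%N.
Proof. by rewrite /board_len; elim: u => [|[] u IH] //=; rewrite IH; lia. Qed.

Lemma board_len_dominofree (u : seq tile) :
  board_len u = (board_len (dominofree u) + 2 * count is_domino u)%N.
Proof. by rewrite /board_len; elim: u => [|[] u IH] //=; rewrite IH; lia. Qed.

Lemma board_len_decolour (u : seq tile) : board_len (map decolour u) = board_len u.
Proof. by rewrite /board_len; elim: u => [|[] u IH] //=; rewrite IH. Qed.

Section TransformT.

Variable t : seq tile.

Let nonwhite_rev : all (fun c => ~~ is_white c) (rev (nonwhite t)).
Proof. by rewrite all_rev filter_all. Qed.

Lemma nonwhite_transformT : nonwhite (transformT t) = rev (nonwhite t).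
Proof. by rewrite nonwhite_fill // size_rev size_filter. Qed.

Lemma count_transformT (P : pred tile) : P White = false ->
  count P (transformT t) = count P t.
Proof.
by move=> PW; rewrite -(count_nonwhite _ _ PW) nonwhite_transformT count_rev count_nonwhite.
Qed.

Lemma white_offset_transformT (p : nat) : white_offset p (transformT t) = white_offset p t.
Proof. exact: white_offset_fill. Qed.

Lemma count_white_transformT : count is_white (transformT t) = count is_white t.
Proof. exact: count_white_fill. Qed.

Lemma board_len_transformT : board_len (transformT t) = board_len t.
Proof.
rewrite board_len_nonwhite nonwhite_transformT board_len_rev.
by rewrite count_white_transformT -board_len_nonwhite.
Qed.

Hypothesis tnc : no_colourless t.

Lemma all_bD_nonwhite : all is_bD (nonwhite t).
Proof. by move: tnc; elim: t => [|[] u IH] //=. Qed.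

Lemma no_colourless_transformT : no_colourless (transformT t).
Proof. by rewrite -all_nonwhite // nonwhite_transformT all_rev all_nonwhite. Qed.

End TransformT.

Theorem proposition2p4 (R : realFieldType) (q r s x : R) (n k l : nat)
  (t : seq tile) :
  q != -1 ->
  all (fun c => ~~ is_colourless c) t ->
  board_len t = n ->
  count is_domino t = k ->
  count is_black t = l ->
  board_len (tilingA t) = n /\ board_len (tilingB t) = (n - 2 * k)%N /\
  w_r q r s x t = q ^+ (k * l) * w_r q r s x (tilingA t) * w_r q r s x (tilingB t).
Proof.
move=> _ tnc <- dom_k black_l; rewrite /tilingA /tilingB.
have Tnc := no_colourless_transformT t tnc.
split; first by rewrite board_len_decolour board_len_transformT.
split.
  by rewrite -(board_len_transformT t) (board_len_dominofree (transformT t))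
    count_transformT ?dom_k ?addnK.
have qexp_split : qexp 0 t = (k * l + qexp 0 (map decolour (transformT t))
                              + qexp 0 (dominofree (transformT t)))%N.
  rewrite -addnA qexp_decolour_dominofree // qexp_nonwhite // -(revK (nonwhite t)).
  rewrite prefix_len_sum_rev ?all_rev ?all_bD_nonwhite // nonwhite_transformT.
  by rewrite white_offset_transformT !count_rev !count_nonwhite // dom_k black_l addnCA.
rewrite /w_r !wt_fromE qexp_split !count_decolour // ?count_domino_dominofree.
rewrite !count_dominofree // count_white_transformT !count_transformT //= dom_k black_l.
by rewrite !mul0n !mul1n !exprD; ring.
Qed.
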